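(* Let $k$ be a field of characteristic $0$, $R=k[x_1,\ldots,x_n]$, and let $I\subset R$ be a homogeneous Artinian ideal, with $f_2,\ldots,f_n$ and $J_1,\ldots,J_{n-1}$ defined for $\mathrm{gin}(I)$ as in the context. Then $\mathrm{gin}(I)$ is almost reverse lexicographic if and only if for every $1\le i\le n-1$ the following two conditions hold: (1) $f_{i+1}(0,\ldots,0,|\alpha|+1)+1\le f_{i+1}(\alpha)$ for every $\alpha=(\alpha_1,\ldots,\alpha_i)\in J_i$; (2) $f_{i+1}(\beta)\le f_{i+1}(\alpha)$ for all $\alpha,\beta\in J_i$ with $|\alpha|=|\beta|$ and $\alpha<\beta$.
   Context: Monomials of $R$ are ordered by the degree reverse lexicographic order with $x_1>\cdots>x_n$; $\mathrm{gin}(I)$ is the generic initial ideal of $I$ with respect to this order. A homogeneous ideal is Artinian if $R/I$ is finite-dimensional over $k$. A monomial ideal $J$ is almost reverse lexicographic if for every minimal generator $m$ of $J$ and every monomial $M$ with $\deg M=\deg m$ and $M>m$, we have $M\in J$. Define $f_1=\min\{t\mid x_1^t\in\mathrm{gin}(I)\}$ and for $2\le i\le n$, $f_i(\alpha_1,\ldots,\alpha_{i-1})=\min\{t\ge0\mid x_1^{\alpha_1}\cdots x_{i-1}^{\alpha_{i-1}}x_i^t\in\mathrm{gin}(I)\}$ (value $\infty$ if none). For $1\le i\le n-1$, $J_i=\{(\alpha_1,\ldots,\alpha_i)\in\mathbb{Z}_{\ge0}^i\mid \alpha_1<f_1,\ \alpha_j<f_j(\alpha_1,\ldots,\alpha_{j-1})\text{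 for }2\le j\le i\}$. For $\alpha\in\mathbb{Z}_{\ge0}^i$, $|\alpha|=\sum_j\alpha_j$, and for $\alpha,\beta\in\mathbb{Z}_{\ge0}^i$ we write $\alpha<\beta$ if $x_1^{\alpha_1}\cdots x_i^{\alpha_i}<x_1^{\beta_1}\cdots x_i^{\beta_i}$ in the reverse lexicographic order. *)

From HB Require Import structures.
From mathcomp Require Import all_boot all_order all_algebra.
From mathcomp Require Import finmap mpoly.
From Stdlib Require Import ClassicalEpsilon.

Set Implicit Arguments.
Unset Strict Implicit.
Unset Printing Implicit Defensive.

Import GRing.Theory.
Local Open Scope ring_scope.

Section GinDefs.
Variables (n : nat) (k : fieldType).

Definition is_ideal (I : {mpoly k[n]} -> Prop) : Prop :=
  [/\ I 0,
      (forall f g, I f -> I g -> I (f + g)) &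
      (forall r f, I f -> I (r * f))].

Definition homog_comp (d : nat) (f : {mpoly k[n]}) : {mpoly k[n]} :=
  \sum_(m <- msupp f | mdeg m == d) f@_m *: 'X_[m].

Definition is_homogeneous_ideal (I : {mpoly k[n]} -> Prop) : Prop :=
  is_ideal I /\ forall f d, I f -> I (homog_comp d f).

(* Artinian: R/I finite-dimensional over k, i.e. finitely many polynomials
   span R modulo I *)
Definition is_artinian (I : {mpoly k[n]} -> Prop) : Prop :=
  exists s : seq {mpoly k[n]}, forall f : {mpoly k[n]},
    exists c : nat -> k, I (f - \sum_(j < size s) c j *: nth 0 s j).

(* drevlt a b  <->  x^a < x^b *)
Definition drevlt (a b : 'X_{1..n}) : Prop :=
  (mdeg a < mdeg b)%N \/
  (mdeg a = mdeg b /\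
   exists i : 'I_n, (b i < a i)%N /\ forall j : 'I_n, (i < j)%N -> a j = b j).

Definition is_lead_mono (f : {mpoly k[n]}) (m : 'X_{1..n}) : Prop :=
  m \in msupp f /\ forall m', m' \in msupp f -> m' = m \/ drevlt m' m.

(* initial ideal, described by the set of monomials it contains *)
Definition in_ideal (I : {mpoly k[n]} -> Prop) (m : 'X_{1..n}) : Prop :=
  exists f, [/\ I f, f != 0 & is_lead_mono f m].

Definition coord_change (g : 'M[k]_n) (f : {mpoly k[n]}) : {mpoly k[n]} :=
  f \mPo [tuple \sum_(j < n) g i j *: 'X_j | i < n].

Definition act_ideal (g : 'M[k]_n) (I : {mpoly k[n]} -> Prop) :
  {mpoly k[n]} -> Prop :=
  fun h => exists f, I f /\ h = coord_change g f.

(* J is the generic initial ideal of I: there is a nonempty Zariski open set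
   {g | g invertible, P(g) <> 0} (P a nonzero polynomial in the n*n entries)
   on which in(g.I) = J. *)
Definition is_gin (I : {mpoly k[n]} -> Prop) (J : 'X_{1..n} -> Prop) : Prop :=
  exists P : {mpoly k[n * n]}, P != 0 /\
    forall g : 'M[k]_n, g \in unitmx ->
      P.@[fun ij => mxvec g 0 ij] != 0 ->
      forall m, in_ideal (act_ideal g I) m <-> J m.

Definition mdivides (a b : 'X_{1..n}) : Prop := forall i : 'I_n, (a i <= b i)%N.

Definition min_gen (J : 'X_{1..n} -> Prop) (m : 'X_{1..n}) : Prop :=
  J m /\ forall m', mdivides m' m -> m' <> m -> ~ J m'.

Definition almost_revlex (J : 'X_{1..n} -> Prop) : Prop :=
  forall m, min_gen J m ->
    forall M : 'X_{1..n}, mdeg M = mdeg m -> drevlt m M -> J M.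

(* the monomial x_1^{s_1} ... x_l^{s_l} (entries beyond n ignored) *)
Definition mono_of (s : seq nat) : 'X_{1..n} := [multinom nth 0%N s i | i < n].

End GinDefs.

(* ---------- extended naturals: None = infinity ---------- *)
Definition ole (a b : option nat) : bool :=
  match a, b with
  | _, None => true
  | None, Some _ => false
  | Some x, Some y => (x <= y)%N
  end.
Definition olt (a b : option nat) : bool :=
  match a, b with
  | None, _ => false
  | Some _, None => true
  | Some x, Some y => (x < y)%N
  end.
Definition osucc (a : option nat) : option nat := omap S a.

Definition omin (P : nat -> Prop) : option nat :=
  epsilon (inhabits None)
    (fun o => match o with
              | Some t => P t /\ forall s, P s -> (t <= s)%N
              | None => forall s, ~ P s
              end).

Section FJ.
Variables (n : nat).
(* f_{l+1}(alpha) for alpha = (alpha_1..alpha_l) (l = size alpha):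
   min { t | x^alpha x_{l+1}^t in J }; with alpha = [::] this is f_1. *)
Definition fJ (J : 'X_{1..n} -> Prop) (alpha : seq nat) : option nat :=
  omin (fun t => J (mono_of n (rcons alpha t))).

(* alpha in J_i (i = size alpha) *)
Definition inJset (J : 'X_{1..n} -> Prop) (alpha : seq nat) : Prop :=
  forall j, (j < size alpha)%N -> olt (Some (nth 0%N alpha j)) (fJ J (take j alpha)).
End FJ.

From HB Require Import structures.
From mathcomp Require Import all_boot all_order all_algebra.
From mathcomp Require Import finmap mpoly zify.
From Stdlib Require Import ClassicalEpsilon Classical Wf_nat.

Set Implicit Arguments.
Unset Strict Implicit.
Unset Printing Implicit Defensive.

(* Only the monomial combinatorics of gin(I) matters. A field of characteristic
   0 is infinite, so some invertible change of coordinates g avoids the proper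
   Zariski-closed set in the definition of gin; then gin(I) is the initial
   ideal of g.I and is therefore closed under multiplication by variables.
   For such a J, f_(i+1)(alpha) <= t iff x^alpha x_(i+1)^t lies in J, and
   alpha lies in J_i iff x^alpha does not, so (1) and (2) become statements
   about membership in J.
   If J is almost revlex and x^alpha x_(i+1)^t is in J while x^alpha is not,
   a minimal generator g dividing it involves x_(i+1). Replacing the x_1..x_i
   part of g by a power of x_i of one higher degree and lowering its
   x_(i+1)-exponent by one (for (1)), or replacing that part by x^beta or a
   divisor of x^beta (for (2)), gives a revlex-larger monomial of the same
   degree as g, which lies in J and divides the required monomial.
   Conversely, write a minimal generator as x^alpha x_(q+1)^s with x_(q+1) its
   last variable. Iterating (1) moves degree from x_(q+1) onto x_q, and since
   x_q^e is the revlex-smallest monomial of degree e in x_1..x_q, (2) then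
   reaches every monomial of the same degree above the generator. *)

Lemma omin_spec (P : nat -> Prop) :
  match omin P with
  | Some t => P t /\ forall s, P s -> t <= s
  | None => forall s, ~ P s
  end.
Proof.
apply: (epsilon_spec (inhabits None) (fun o => match o with
  | Some t => P t /\ forall s, P s -> t <= s
  | None => forall s, ~ P s end)).
have [[t Pt]|noP] := classic (exists t, P t); last first.
  by exists None => s Ps; apply: noP; exists s.
have [t0 [[Pt0 t0_min] _]] :=
  dec_inh_nat_subset_has_unique_least_element P (fun t => classic (P t)) (ex_intro _ t Pt).
by exists (Some t0); split=> // s /t0_min /leP.
Qed.

Lemma omin_le_Some (P : nat -> Prop) t :
  (forall a b, a <= b -> P a -> P b) -> ole (omin P) (Some t) <-> P t.
Proof.
move=> P_mono; have := omin_spec P.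
case: (omin P) => [a [Pa a_min]|noP] /=; split=> //.
- by move=> le_at; exact: P_mono le_at Pa.
- exact: a_min.
- by move=> /noP.
Qed.

Lemma ole_osucc_iff (A B : option nat) :
  ole (osucc A) B <-> forall t, ole B (Some t) -> 0 < t /\ ole A (Some t.-1).
Proof.
case: A => [a|]; case: B => [b|] //=; split=> // le_ab.
- by move=> t le_bt; split; lia.
- by have := le_ab b (leqnn b); lia.
- by case: (le_ab b (leqnn b)).
Qed.

Lemma ole_iff_Some (A B : option nat) :
  ole B A <-> forall t, ole A (Some t) -> ole B (Some t).
Proof.
case: A => [a|]; case: B => [b|] //=; split=> [le_ba t|le_ba] //;
  try exact: leq_trans; exact: le_ba _ (leqnn _).
Qed.

(* [xpow_seq i e] is the exponent vector of x_i^e, variables numbered from 1. *)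
Definition xpow_seq i e := rcons (nseq (i - 1) 0) e.

Section Monomials.
Variable n : nat.
Implicit Types (a b : seq nat) (m d : 'X_{1..n}).

Lemma mono_ofE a (j : 'I_n) : mono_of n a j = nth 0 a j.
Proof. exact: mnmE. Qed.

Lemma mono_of_rcons a t (j : 'I_n) : mono_of n (rcons a t) j =
  if j < size a then nth 0 a j else if j == size a :> nat then t else 0.
Proof. by rewrite mono_ofE nth_rcons. Qed.

Lemma mono_of_out a (j : 'I_n) : size a <= j -> mono_of n a j = 0.
Proof. by move=> le_aj; rewrite mono_ofE nth_default. Qed.

Lemma mono_of_rcons0 a : mono_of n (rcons a 0) = mono_of n a.
Proof.
apply/mnmP => j; rewrite mono_of_rcons mono_ofE; case: ltnP => // le_aj.
by rewrite nth_default //; case: eqP.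
Qed.

Lemma mono_of_rcons_congr a b t : size a = size b -> mono_of n a = mono_of n b ->
  mono_of n (rcons a t) = mono_of n (rcons b t).
Proof.
move=> eq_size eq_ab; apply/mnmP => j; rewrite !mono_of_rcons eq_size.
by case: ifP => // _; rewrite -!mono_ofE eq_ab.
Qed.

Lemma mono_of_nseq0 i : mono_of n (nseq i 0) = 0%MM.
Proof. by apply/mnmP => j; rewrite mono_ofE nth_nseq mnm0E; case: ifP. Qed.

Lemma mdeg_mono_of a : size a <= n -> mdeg (mono_of n a) = sumn a.
Proof.
move=> le_an; rewrite mdegE (eq_bigr (fun j : 'I_n => nth 0 a j)) => [|j _]; last first.
  exact: mono_ofE.
rewrite -(big_mkord xpredT (nth 0 a)) (big_cat_nat (leq0n _) le_an) /=.
rewrite [X in _ + X]big_nat_cond [X in _ + X]big1 ?addn0; last first.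
  by move=> j /andP[/andP[le_aj _] _]; rewrite nth_default.
by rewrite sumnE -[X in \sum_(i <- X) i](mkseq_nth 0 a) big_map /index_iota subn0.
Qed.

Lemma mdeg_mono_of_rcons a t : size a < n -> mdeg (mono_of n (rcons a t)) = sumn a + t.
Proof. by move=> lt_an; rewrite mdeg_mono_of ?size_rcons // sumn_rcons. Qed.

Lemma mnm_le_mdeg m j : m j <= mdeg m.
Proof. by rewrite mdegE (bigD1 j) //= leq_addr. Qed.

Lemma mdivides_mdeg m m' : mdivides m m' -> mdeg m <= mdeg m'.
Proof. by move=> div_mm'; rewrite !mdegE; apply: leq_sum => j _; exact: div_mm'. Qed.

Lemma mdivides_mdeg_gap m m' j : mdivides m m' -> mdeg m + (m' j - m j) <= mdeg m'.
Proof.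
move=> div_mm'; rewrite !mdegE (bigD1 j) //= [leqRHS](bigD1 j) //=.
have : \sum_(i < n | i != j) m i <= \sum_(i < n | i != j) m' i.
  by apply: leq_sum => i _; exact: div_mm'.
have := div_mm' j; move: (\sum_(i < n | i != j) m i) (\sum_(i < n | i != j) m' i); lia.
Qed.

Lemma mdivides_eq m m' : mdivides m m' -> mdeg m = mdeg m' -> m = m'.
Proof.
move=> div_mm' eq_deg; apply/mnmP => j; apply/eqP; rewrite eqn_leq div_mm' /=.
by have := mdivides_mdeg_gap j div_mm'; lia.
Qed.

Lemma drevlt_witness_gt0 m M (r : 'I_n) : mdeg M = mdeg m -> M r < m r ->
  (forall j : 'I_n, r < j -> m j = M j) -> 0 < r.
Proof.
move=> eq_deg lt_r eq_above; rewrite lt0n; apply/eqP => r0.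
have div_Mm : mdivides M m.
  move=> j; have [lt_rj|lt_jr|/val_inj <-] := ltngtP r j; [by rewrite eq_above | lia | exact: ltnW].
by have := mdivides_mdeg_gap r div_Mm; rewrite eq_deg; lia.
Qed.

Lemma mdivides_rcons a t : mdivides (mono_of n a) (mono_of n (rcons a t)).
Proof. by move=> j; rewrite mono_of_rcons mono_ofE; case: ltnP => // ?; rewrite nth_default. Qed.

Lemma exists_mdivides_mdeg m w : w <= mdeg m -> exists d, mdivides d m /\ mdeg d = w.
Proof.
elim: w => [|w IHw] le_wm; first by exists 0%MM; split=> [j|]; rewrite ?mnm0E ?mdeg0.
have [d [div_dm deg_d]] := IHw (ltnW le_wm).
case: (pickP (fun j => d j < m j)) => [j lt_dm|d_eq]; last first.
  have eq_dm : d = m.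
    by apply/mnmP => j; apply/eqP; rewrite eqn_leq div_dm leqNgt d_eq.
  by move: le_wm; rewrite -eq_dm deg_d ltnn.
exists (d + U_(j))%MM; split; last by rewrite mdegD mdeg1 deg_d addn1.
by move=> i; rewrite mnmDE mnm1E; case: eqP => [<-|_] /=; rewrite ?addn1 ?addn0 ?div_dm.
Qed.

Lemma exists_min_gen (J : 'X_{1..n} -> Prop) m : J m -> exists2 g, min_gen J g & mdivides g m.
Proof.
elim: (mdeg m) {-2}m (leqnn (mdeg m)) => [|w IHw] m0 deg_m0 Jm0.
  exists m0 => //; split=> // m' div_m' ne_m'; exfalso; apply: ne_m'.
  by apply: mdivides_eq => //; apply/eqP; rewrite eqn_leq mdivides_mdeg //= (leq_trans deg_m0).
have [gen_m0|] := classic (min_gen J m0); first by exists m0.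
case/not_and_or => // /not_all_ex_not [m' /not_all_ex_not [div_m' /not_all_ex_not [ne_m' /NNPP Jm']]].
have lt_deg : mdeg m' < mdeg m0.
  rewrite ltn_neqAle mdivides_mdeg // andbT; apply: contra_notN ne_m' => /eqP.
  exact: mdivides_eq.
have [g gen_g div_g] := IHw m' (leq_trans lt_deg deg_m0) Jm'.
by exists g => // j; exact: leq_trans (div_g j) (div_m' j).
Qed.

Lemma size_take_mnm m i : i <= n -> size (take i m) = i.
Proof. by move=> le_in; rewrite size_take size_tuple; case: ltnP => //; lia. Qed.

Lemma mono_of_take m i (j : 'I_n) : mono_of n (take i m) j = if j < i then m j else 0.
Proof.
rewrite mono_ofE; case: ltnP => lt_ji; first by rewrite nth_take // -mnm_nth.
by rewrite nth_default // size_take; case: ltnP => //; lia.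
Qed.

Lemma mono_of_take_rcons m (q : 'I_n) : (forall j : 'I_n, q < j -> m j = 0) ->
  m = mono_of n (rcons (take q m) (m q)).
Proof.
move=> m_out; apply/mnmP => j; rewrite mono_of_rcons size_take_mnm ?(ltnW (ltn_ord q)) //.
case: ltnP => [lt_jq|le_qj]; first by rewrite nth_take // -mnm_nth.
case: eqP => [/val_inj -> //|ne_jq]; apply: m_out.
by rewrite ltn_neqAle le_qj andbT eq_sym; apply/eqP.
Qed.

Lemma size_xpow_seq i e : 0 < i -> size (xpow_seq i e) = i.
Proof. by move=> i_gt0; rewrite size_rcons size_nseq subn1 prednK. Qed.

Lemma sumn_xpow_seq i e : sumn (xpow_seq i e) = e.
Proof. by rewrite sumn_rcons sumn_nseq mul0n. Qed.

Lemma mono_of_xpow_seq i e (j : 'I_n) : 0 < i ->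
  mono_of n (xpow_seq i e) j = if j == i - 1 :> nat then e else 0.
Proof.
move=> i_gt0; rewrite mono_of_rcons size_nseq.
by case: ltnP => // lt_ji; rewrite nth_nseq lt_ji; case: eqP => //; lia.
Qed.

End Monomials.

Definition upward_closed n (J : 'X_{1..n} -> Prop) :=
  forall m m', mdivides m m' -> J m -> J m'.

Lemma upward_closed_of_MX n (J : 'X_{1..n} -> Prop) :
  (forall m (i : 'I_n), J m -> J (m + U_(i))%MM) -> upward_closed J.
Proof.
move=> JMX m m' /mnm_lepP /submK <- Jm; move: (m' - m)%MM => d.
elim: (mdeg d) {-2}d (leqnn (mdeg d)) => [|w IHw] d0 deg_d0.
  by move: deg_d0; rewrite leqn0 mdeg_eq0 => /eqP ->; rewrite add0m.
case: (pickP (fun j => 0 < d0 j)) => [j d0j|d0_eq]; last first.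
  have -> : d0 = 0%MM by apply/mnmP => j; rewrite mnm0E; have := d0_eq j; lia.
  by rewrite add0m.
have le_U : (U_(j) <= d0)%MM by apply/mnm_lepP => i; rewrite mnm1E; case: eqP => // <-.
rewrite -(submK le_U) -addmA [(U_(j) + m)%MM]addmC addmA; apply: JMX; apply: IHw.
by move: deg_d0; rewrite -{1}(submK le_U) mdegD mdeg1 addn1.
Qed.

(* Conditions (1) and (2) for an upward-closed J, with f_(i+1) and J_i read
   through [fJ_le_Some] and [inJsetE]. *)
Definition succ_condition n (J : 'X_{1..n} -> Prop) :=
  forall i, 0 < i < n -> forall a, size a = i -> ~ J (mono_of n a) ->
  forall t, J (mono_of n (rcons a t)) ->
  J (mono_of n (rcons (xpow_seq i (sumn a).+1) t.-1)).

Definition revlex_condition n (J : 'X_{1..n} -> Prop) :=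
  forall i, 0 < i < n -> forall a b, size a = i -> size b = i ->
  ~ J (mono_of n a) -> ~ J (mono_of n b) -> sumn a = sumn b ->
  drevlt (mono_of n a) (mono_of n b) ->
  forall t, J (mono_of n (rcons a t)) -> J (mono_of n (rcons b t)).

Definition fJ_conditions n (J : 'X_{1..n} -> Prop) :=
  forall i : nat, 1 <= i <= n - 1 ->
    (forall alpha : seq nat, size alpha = i -> inJset J alpha ->
       ole (osucc (fJ J (rcons (nseq (i - 1) 0) (sumn alpha).+1))) (fJ J alpha)) /\
    (forall alpha beta : seq nat, size alpha = i -> size beta = i ->
       inJset J alpha -> inJset J beta -> sumn alpha = sumn beta ->
       drevlt (mono_of n alpha) (mono_of n beta) -> ole (fJ J beta) (fJ J alpha)).

Section UpwardClosed.
Variables (n : nat) (J : 'X_{1..n} -> Prop).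
Hypothesis J_up : upward_closed J.

Lemma fJ_le_Some a t : ole (fJ J a) (Some t) <-> J (mono_of n (rcons a t)).
Proof.
apply: omin_le_Some => x y le_xy; apply: J_up => j.
by rewrite !mono_of_rcons; case: ifP => //; case: ifP.
Qed.

Lemma inJsetE a : 0 < size a -> inJset J a <-> ~ J (mono_of n a).
Proof.
have olt_ole j : olt (Some (nth 0 a j)) (fJ J (take j a)) =
    ~~ ole (fJ J (take j a)) (Some (nth 0 a j)).
  by case: (fJ _ _) => //= y; rewrite ltnNge.
move=> a_gt0; split=> [inJ_a Ja|notJa j lt_ja].
  have /inJ_a : (size a).-1 < size a by rewrite ltn_predL.
  rewrite olt_ole => /negP; apply; apply/fJ_le_Some.
  by rewrite -take_nth ?ltn_predL // prednK // take_size.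
rewrite olt_ole; apply/negP => /fJ_le_Some /J_up; apply: contra_not notJa; apply.
move=> i; rewrite mono_of_rcons mono_ofE size_take lt_ja.
by case: ltnP => [lt_ij|_]; [rewrite nth_take | case: eqP => [->|]].
Qed.

Lemma rcons_exponent_gt0 a t : ~ J (mono_of n a) -> J (mono_of n (rcons a t)) -> 0 < t.
Proof.
move=> notJa Jat; rewrite lt0n; apply: contra_notN notJa => /eqP t0.
by rewrite -(mono_of_rcons0 n) -t0.
Qed.

Lemma fJ_conditionsE : fJ_conditions J <-> succ_condition J /\ revlex_condition J.
Proof.
have range_iff i : (1 <= i <= n - 1) = (0 < i < n).
  by apply/andP/andP => -[? ?]; split; lia.
split=> [fJ_J|[J_succ J_revlex] i].
  split=> i i_range; have [i_gt0 _] := andP i_range.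
  - have /fJ_J[fJ_succ _] : 1 <= i <= n - 1 by rewrite range_iff.
    move=> a size_a notJa t /fJ_le_Some le_at.
    have inJ_a : inJset J a by apply/inJsetE; rewrite ?size_a.
    by have /ole_osucc_iff/(_ t le_at) [_ /fJ_le_Some] := fJ_succ a size_a inJ_a.
  - have /fJ_J[_ fJ_revlex] : 1 <= i <= n - 1 by rewrite range_iff.
    move=> a b size_a size_b notJa notJb eq_sum lt_ab t /fJ_le_Some le_at.
    have inJ_a : inJset J a by apply/inJsetE; rewrite ?size_a.
    have inJ_b : inJset J b by apply/inJsetE; rewrite ?size_b.
    by have /ole_iff_Some/(_ t le_at)/fJ_le_Some :=
      fJ_revlex a b size_a size_b inJ_a inJ_b eq_sum lt_ab.
rewrite range_iff => i_range; have i_gt0 : 0 < i by case/andP: i_range.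
split=> [a size_a|a b size_a size_b].
  rewrite inJsetE ?size_a // => notJa.
  apply/ole_osucc_iff => t /fJ_le_Some Jat; split; first exact: rcons_exponent_gt0 Jat.
  exact/fJ_le_Some/(J_succ i i_range a size_a notJa t Jat).
rewrite !inJsetE ?size_a ?size_b // => notJa notJb eq_sum lt_ab.
apply/ole_iff_Some => t /fJ_le_Some Jat; apply/fJ_le_Some.
exact: J_revlex i_range a b size_a size_b notJa notJb eq_sum lt_ab t Jat.
Qed.

Lemma min_gen_of_rcons (i : 'I_n) a t : size a = i -> ~ J (mono_of n a) ->
  J (mono_of n (rcons a t)) ->
  exists g, [/\ min_gen J g, mdivides g (mono_of n (rcons a t)),
               forall j : 'I_n, i < j -> g j = 0, 0 < g i & mdeg g <= sumn a + g i].
Proof.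
move=> size_a notJa Jat; have [g gen_g div_g] := exists_min_gen Jat.
have g_out (j : 'I_n) : i < j -> g j = 0.
  move=> lt_ij; apply/eqP; rewrite -leqn0; apply: leq_trans (div_g j) _.
  by rewrite mono_of_rcons size_a ltnNge (ltnW lt_ij) gtn_eqF.
have le_gi : g i <= t by have := div_g i; rewrite mono_of_rcons size_a ltnn eqxx.
exists g; split=> //.
  rewrite lt0n; apply: contra_notN notJa => /eqP gi0; apply: J_up gen_g.1 => j.
  have [lt_ji|lt_ij|/val_inj ->] := ltngtP j i; last by rewrite gi0.
    by have := div_g j; rewrite mono_of_rcons size_a lt_ji mono_ofE.
  by rewrite g_out.
have := mdivides_mdeg_gap i div_g; rewrite mdeg_mono_of_rcons ?size_a //.
by rewrite mono_of_rcons size_a ltnn eqxx; lia.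
Qed.

Lemma succ_condition_of_almost_revlex : almost_revlex J -> succ_condition J.
Proof.
move=> J_arl i /andP[i_gt0 lt_in] a size_a notJa t Jat.
pose io : 'I_n := Ordinal lt_in.
have [g [gen_g div_g g_out gi_gt0 deg_g]] := @min_gen_of_rcons io a t size_a notJa Jat.
have le_gi : g io <= t by have := div_g io; rewrite mono_of_rcons size_a ltnn eqxx.
have le_gi_deg := mnm_le_mdeg g io.
pose M := mono_of n (rcons (xpow_seq i (mdeg g - g io).+1) (g io).-1).
have deg_M : mdeg M = mdeg g.
  by rewrite mdeg_mono_of_rcons ?size_xpow_seq ?sumn_xpow_seq //; lia.
have JM : J M.
  apply: (J_arl _ gen_g _ deg_M); right; split=> //; exists io; split.
    by rewrite /M mono_of_rcons size_xpow_seq // ltnn eqxx /=; lia.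
  by move=> j lt_ij; rewrite g_out // /M mono_of_out // size_rcons size_xpow_seq.
apply: J_up JM => j; rewrite !mono_of_rcons !size_xpow_seq //.
case: ltnP => [lt_ji|_]; last by case: eqP => //; lia.
by rewrite -!mono_ofE !mono_of_xpow_seq //; case: eqP => //; lia.
Qed.

Lemma revlex_condition_of_almost_revlex : almost_revlex J -> revlex_condition J.
Proof.
move=> J_arl i /andP[i_gt0 lt_in] a b size_a size_b notJa notJb eq_sum lt_ab t Jat.
pose io : 'I_n := Ordinal lt_in.
have [g [gen_g div_g g_out gi_gt0 deg_g]] := @min_gen_of_rcons io a t size_a notJa Jat.
have le_gi : g io <= t by have := div_g io; rewrite mono_of_rcons size_a ltnn eqxx.
have le_gi_deg := mnm_le_mdeg g io.
have [lt_deg|ge_deg] := ltnP (mdeg g) (sumn a + g io).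
  have [d [div_d deg_d]] : exists d, mdivides d (mono_of n b) /\ mdeg d = (mdeg g - g io).+1.
    by apply: exists_mdivides_mdeg; rewrite mdeg_mono_of ?size_b ?(ltnW lt_in) // -eq_sum; lia.
  have d_out (j : 'I_n) : i <= j -> d j = 0.
    by move=> le_ij; apply/eqP; rewrite -leqn0 (leq_trans (div_d j)) // mono_of_out ?size_b.
  pose M := (d + U_(io) *+ (g io).-1)%MM.
  have deg_M : mdeg M = mdeg g by rewrite mdegD mdegMn mdeg1 deg_d; lia.
  have JM : J M.
    apply: (J_arl _ gen_g _ deg_M); right; split=> //; exists io; split.
      by rewrite mnmDE mulmnE mnm1E eqxx d_out //=; lia.
    move=> j lt_ij; rewrite g_out // mnmDE mulmnE mnm1E d_out ?(ltnW lt_ij) //.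
    by case: eqP => [eq_ij|]; rewrite ?muln0 //; move: lt_ij; rewrite -eq_ij ltnn.
  apply: J_up JM => j; rewrite mnmDE mulmnE mnm1E mono_of_rcons size_b.
  case: (eqVneq io j) => [<-|ne_ij] /=; first by rewrite d_out // ltnn eqxx; lia.
  rewrite mul0n addn0; case: ltnP => [lt_ji|le_ij]; last by rewrite d_out.
  by rewrite -mono_ofE div_d.
have eq_g : g = mono_of n (rcons a (g io)).
  apply: mdivides_eq; last by rewrite mdeg_mono_of_rcons ?size_a //; lia.
  move=> j; have := div_g j; rewrite !mono_of_rcons size_a.
  case: ltnP => // _; case: eqP => // eq_ji _.
  by rewrite (_ : j = io) //; exact: val_inj.
case: lt_ab => [|[_ [p [lt_p eq_above]]]].
  by rewrite !mdeg_mono_of ?size_a ?size_b ?(ltnW lt_in) // eq_sum ltnn.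
have lt_pi : p < i.
  by rewrite ltnNge; apply/negP => le_ip; move: lt_p; rewrite [X in _ < X]mono_of_out ?size_a.
apply: (J_up _ (J_arl g gen_g (mono_of n (rcons b (g io))) _ _)).
- by move=> j; rewrite !mono_of_rcons size_b; case: ifP => //; case: ifP.
- by rewrite {2}eq_g !mdeg_mono_of_rcons ?size_a ?size_b ?eq_sum.
- right; split; first by rewrite {1}eq_g !mdeg_mono_of_rcons ?size_a ?size_b ?eq_sum.
  exists p; split; first by rewrite {2}eq_g !mono_of_rcons size_a size_b lt_pi -!mono_ofE.
  move=> j lt_pj; rewrite {1}eq_g !mono_of_rcons size_a size_b.
  by case: ifP => // _; rewrite -!mono_ofE eq_above.
Qed.

Definition xpow_saturated i := forall c, J (mono_of n (xpow_seq i c)) ->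
  forall m : 'X_{1..n}, (forall j : 'I_n, i <= j -> m j = 0) -> mdeg m = c -> J m.

Lemma succ_condition_iter i a s : succ_condition J -> 0 < i < n -> size a = i ->
  ~ J (mono_of n a) -> J (mono_of n (rcons a s)) ->
  forall e, sumn a < e -> (forall d, sumn a < d < e -> ~ J (mono_of n (xpow_seq i d))) ->
  J (mono_of n (rcons (xpow_seq i e) (sumn a + s - e))).
Proof.
move=> J_succ i_range size_a notJa Jas; elim=> [//|e IHe] lt_ae notJ_below.
have i_gt0 : 0 < i by case/andP: i_range.
have [eq_ae|ne_ae] := eqVneq (sumn a) e.
  rewrite -eq_ae (_ : sumn a + s - (sumn a).+1 = s.-1); last by lia.
  exact: J_succ i_range a size_a notJa s Jas.
move: lt_ae; rewrite ltnS leq_eqVlt (negbTE ne_ae) => /= lt_ae.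
have notJe : ~ J (mono_of n (xpow_seq i e)) by apply: notJ_below; rewrite lt_ae /=.
have Je : J (mono_of n (rcons (xpow_seq i e) (sumn a + s - e))).
  apply: (IHe lt_ae) => d /andP[lt_ad lt_de]; apply: notJ_below.
  by rewrite lt_ad ltnS ltnW.
have := J_succ i i_range _ (size_xpow_seq e i_gt0) notJe _ Je.
by rewrite sumn_xpow_seq (_ : (sumn a + s - e).-1 = sumn a + s - e.+1) //; lia.
Qed.

(* Iterating (1) moves the degree of x^a onto x_i; (2) then trades x_i^|b| for
   the revlex-larger x^b. *)
Lemma mem_rcons_shift i : succ_condition J -> revlex_condition J -> 0 < i < n ->
  xpow_saturated i ->
  forall a s b, size a = i -> ~ J (mono_of n a) -> J (mono_of n (rcons a s)) ->
  size b = i -> sumn a < sumn b <= sumn a + s ->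
  J (mono_of n (rcons b (sumn a + s - sumn b))).
Proof.
move=> J_succ J_revlex i_range sat_i a s b size_a notJa Jas size_b /andP[lt_ab _].
have [i_gt0 lt_in] := andP i_range.
have [Jb|notJb] := classic (J (mono_of n b)); first exact: J_up (mdivides_rcons _ _) Jb.
have deg_b : mdeg (mono_of n b) = sumn b by rewrite mdeg_mono_of // size_b ltnW.
have notJ_xpow e : e <= sumn b -> ~ J (mono_of n (xpow_seq i e)).
  rewrite -deg_b => /exists_mdivides_mdeg [d [div_d deg_d]] Jxe.
  apply: notJb; apply: (J_up div_d); apply: (sat_i _ Jxe d _ deg_d) => j le_ij.
  by apply/eqP; rewrite -leqn0 (leq_trans (div_d j)) // mono_of_out ?size_b.
have Jx : J (mono_of n (rcons (xpow_seq i (sumn b)) (sumn a + s - sumn b))).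
  apply: succ_condition_iter size_a notJa Jas _ lt_ab _ => // d /andP[_ lt_db].
  exact/notJ_xpow/ltnW.
have size_x := size_xpow_seq (sumn b) i_gt0.
have [eq_xb|ne_xb] := eqVneq (mono_of n (xpow_seq i (sumn b))) (mono_of n b).
  by rewrite -(mono_of_rcons_congr _ _ eq_xb) // size_x.
have lt_pn : i - 1 < n by lia.
pose p : 'I_n := Ordinal lt_pn.
apply: (J_revlex i i_range _ b size_x size_b (notJ_xpow _ (leqnn _)) notJb) => //.
  by rewrite sumn_xpow_seq.
right; split; first by rewrite deg_b mdeg_mono_of ?sumn_xpow_seq // size_x ltnW.
exists p; split => [|j /= lt_pj]; last by rewrite !mono_of_out ?size_x ?size_b //; lia.
rewrite mono_of_xpow_seq //= eqxx ltn_neqAle (leq_trans (mnm_le_mdeg _ p)) ?deg_b // andbT.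
apply: contra_neq ne_xb => eq_bp; apply: mdivides_eq; last first.
  by rewrite deg_b mdeg_mono_of ?sumn_xpow_seq // size_x ltnW.
move=> j; rewrite mono_of_xpow_seq //; case: eqP => // eq_jp.
by rewrite (_ : j = p) ?eq_bp //; apply: val_inj.
Qed.

Lemma xpow_saturated_all : succ_condition J -> revlex_condition J ->
  forall i, 0 < i <= n -> xpow_saturated i.
Proof.
move=> J_succ J_revlex; elim=> [//|i IHi] /andP[_ lt_in] c Jxc m m_out deg_m.
have [i0|i_gt0] := posnP i.
  rewrite {}i0 in lt_in m_out Jxc *; suff -> : m = mono_of n (xpow_seq 1 c) by [].
  apply: mdivides_eq; last by rewrite mdeg_mono_of ?size_xpow_seq ?sumn_xpow_seq.
  move=> j; rewrite mono_of_xpow_seq //; case: eqP => [_|ne_j]; first by rewrite -deg_m mnm_le_mdeg.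
  by rewrite m_out //; lia.
pose io : 'I_n := Ordinal lt_in.
have Jxc' : J (mono_of n (rcons (nseq i 0) c)) by move: Jxc; rewrite /xpow_seq subn1.
have [J1|notJ1] := classic (J (mono_of n (nseq i 0))).
  by apply: J_up J1 => j; rewrite mono_of_nseq0 mnm0E.
have eq_m : m = mono_of n (rcons (take i m) (m io)).
  by apply: (mono_of_take_rcons (q := io)) => j lt_ij; apply: m_out.
have size_b : size (take i m) = i by rewrite size_take_mnm // ltnW.
have deg_b : sumn (take i m) + m io = c.
  by rewrite -deg_m [in RHS]eq_m mdeg_mono_of_rcons ?size_b.
have [b0|b_gt0] := posnP (sumn (take i m)).
  suff <- : mono_of n (rcons (nseq i 0) c) = m by [].
  rewrite eq_m (_ : m io = c); last by lia.
  apply: mono_of_rcons_congr; first by rewrite size_nseq.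
  apply/mnmP => j; rewrite mono_of_nseq0 mnm0E.
  have := mnm_le_mdeg (mono_of n (take i m)) j.
  by rewrite mdeg_mono_of ?size_b ?b0; [lia | exact: ltnW].
rewrite eq_m (_ : m io = 0 + c - sumn (take i m)); last by lia.
have sumn0 : sumn (nseq i 0) = 0 by rewrite sumn_nseq.
rewrite -[in 0 + c]sumn0; apply: mem_rcons_shift (size_nseq i 0) notJ1 _ size_b _ => //.
- by rewrite i_gt0.
- by apply: IHi; rewrite i_gt0 ltnW.
- by rewrite sumn0 b_gt0 /=; lia.
Qed.

Lemma almost_revlex_of_conditions :
  succ_condition J -> revlex_condition J -> almost_revlex J.
Proof.
move=> J_succ J_revlex m [Jm m_min] M deg_M [|[_ [r [lt_r eq_above]]]].
  by rewrite deg_M ltnn.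
have mr_gt0 : 0 < m r by apply: leq_ltn_trans lt_r.
case: (arg_maxnP (fun j : 'I_n => nat_of_ord j) (mr_gt0 : (fun j => 0 < m j) r)) => q mq_gt0 q_max.
have m_out (j : 'I_n) : q < j -> m j = 0.
  by move=> lt_qj; apply/eqP; rewrite -leqn0 leqNgt; apply: contraTN lt_qj => /q_max; rewrite -leqNgt.
have le_rq : r <= q := q_max r mr_gt0.
have M_out (j : 'I_n) : q < j -> M j = 0.
  by move=> lt_qj; rewrite -eq_above ?m_out //; exact: leq_ltn_trans lt_qj.
have q_gt0 : 0 < q := leq_trans (drevlt_witness_gt0 deg_M lt_r eq_above) le_rq.
have le_qn : q <= n by exact: ltnW.
have eq_m := mono_of_take_rcons m_out.
have eq_M := mono_of_take_rcons M_out.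
have size_a : size (take q m) = q by exact: size_take_mnm.
have size_b : size (take q M) = q by exact: size_take_mnm.
have q_range : 0 < q < n by rewrite q_gt0 ltn_ord.
have notJa : ~ J (mono_of n (take q m)).
  apply: m_min; first by rewrite [X in mdivides _ X]eq_m; exact: mdivides_rcons.
  by move=> eq_am; move: mq_gt0; rewrite -eq_am mono_of_take ltnn.
have Jas : J (mono_of n (rcons (take q m) (m q))) by rewrite -eq_m.
have deg_m : mdeg m = sumn (take q m) + m q by rewrite {1}eq_m mdeg_mono_of_rcons ?size_a.
have deg_M' : mdeg M = sumn (take q M) + M q by rewrite {1}eq_M mdeg_mono_of_rcons ?size_b.
have [eq_rq|ne_rq] := eqVneq r q.
  rewrite {}eq_rq in lt_r; rewrite eq_M (_ : M q = sumn (take q m) + m q - sumn (take q M)); last by lia.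
  apply: (mem_rcons_shift J_succ J_revlex q_range _ size_a notJa Jas size_b); last by lia.
  by apply: xpow_saturated_all; rewrite // q_gt0.
have lt_rq : r < q by rewrite ltn_neqAle le_rq andbT.
have [Jb|notJb] := classic (J (mono_of n (take q M))).
  by apply: J_up Jb; rewrite [X in mdivides _ X]eq_M; exact: mdivides_rcons.
rewrite eq_M -eq_above //; apply: (J_revlex q q_range _ _ size_a size_b notJa notJb) => //.
  by have := eq_above q lt_rq; lia.
right; split; first by rewrite !mdeg_mono_of ?size_a ?size_b //; have := eq_above q lt_rq; lia.
exists r; split; first by rewrite !mono_of_take lt_rq.
by move=> j lt_rj; rewrite !mono_of_take; case: ifP => // _; exact: eq_above.
Qed.

Lemma almost_revlex_iff_conditions :
  almost_revlex J <-> succ_condition J /\ revlex_condition J.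
Proof.
split=> [J_arl|[J_succ J_revlex]]; last exact: almost_revlex_of_conditions.
by split; [exact: succ_condition_of_almost_revlex | exact: revlex_condition_of_almost_revlex].
Qed.

End UpwardClosed.

Import GRing.Theory.

Lemma drevltDl n (c a b : 'X_{1..n}) : drevlt a b -> drevlt (c + a)%MM (c + b)%MM.
Proof.
rewrite /drevlt !mdegD; case=> [lt_ab|[eq_deg [i [lt_i eq_above]]]].
  by left; rewrite ltn_add2l.
right; split; first by rewrite eq_deg.
exists i; split=> [|j lt_ij]; first by rewrite !mnmDE ltn_add2l.
by rewrite !mnmDE eq_above.
Qed.

Section InitialIdeal.
Local Open Scope ring_scope.
Variables (k : fieldType) (n : nat).

Lemma is_lead_monoMX (f : {mpoly k[n]}) m (i : 'I_n) :
  is_lead_mono f m -> is_lead_mono (f * 'X_i) (m + U_(i))%MM.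
Proof.
move=> [m_supp m_max]; have supp_fX := msuppMX f U_(i); split.
  by rewrite (perm_mem supp_fX); apply/mapP; exists m; rewrite // addmC.
move=> m'; rewrite (perm_mem supp_fX) => /mapP [m'' /m_max [->|lt_m''] ->].
  by left; rewrite addmC.
by right; rewrite [(m + _)%MM]addmC; exact: drevltDl.
Qed.

Lemma coord_change_invmx (g : 'M[k]_n) (i : 'I_n) : g \in unitmx ->
  coord_change g (\sum_(j < n) invmx g i j *: 'X_j) = 'X_i.
Proof.
move=> g_unit; rewrite /coord_change raddf_sum /=.
under eq_bigr => j _ do
  rewrite comp_mpolyZ comp_mpolyXU -tnth_nth tnth_mktuple scaler_sumr.
rewrite exchange_big /=.
under eq_bigr => l _ do under eq_bigr => j _ do rewrite scalerA.
have mulVg_il l : \sum_(j < n) invmx g i j * g j l = (invmx g *m g) i l by rewrite mxE.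
under eq_bigr => l _ do rewrite -scaler_suml mulVg_il mulVmx // mxE.
rewrite (bigD1 i) //= eqxx scale1r big1 ?addr0 // => j /negbTE ne_ji.
by rewrite eq_sym ne_ji scale0r.
Qed.

Lemma in_ideal_act_MX (I : {mpoly k[n]} -> Prop) (g : 'M[k]_n) m (i : 'I_n) :
  is_ideal I -> g \in unitmx ->
  in_ideal (act_ideal g I) m -> in_ideal (act_ideal g I) (m + U_(i))%MM.
Proof.
case=> [_ _ I_mul] g_unit [_ [[f [If ->]] gf_neq0 lead_gf]].
exists (coord_change g f * 'X_i); split; last exact: is_lead_monoMX.
  exists ((\sum_(j < n) invmx g i j *: 'X_j) * f); split; first exact: I_mul.
  by rewrite [in RHS]/coord_change rmorphM /= -/(coord_change _ _) coord_change_invmx // mulrC.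
by rewrite mulf_neq0 // -msupp_eq0 msuppX.
Qed.

End InitialIdeal.

Section GenericCoordinates.
Local Open Scope ring_scope.
Variables (k : fieldType) (char0 : [pchar k] =i pred0).

Lemma natf_inj : injective (fun i : nat => i%:R : k).
Proof.
have natf_eq0 := (pcharf0P k).1 char0.
suff le_inj i j : (i <= j)%N -> i%:R = j%:R :> k -> i = j.
  move=> i j /= eq_ij; have [le_ij|/ltnW le_ji] := leqP i j; first exact: le_inj.
  exact/esym/(le_inj _ _ le_ji)/esym.
move=> le_ij eq_ij; apply/eqP; rewrite eqn_leq le_ij /= -subn_eq0 -natf_eq0.
by rewrite natrB // eq_ij subrr.
Qed.

Lemma poly_nonroot (p : {poly k}) : p != 0 -> exists x, ~~ root p x.
Proof.
move=> p_neq0; apply: NNPP => no_nonroot.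
pose xs := [seq i%:R : k | i <- iota 0 (size p)].
have roots_xs : all (root p) xs.
  by apply/allP => x _; apply: NNPP => /negP not_root; apply: no_nonroot; exists x.
have uniq_xs : uniq xs by rewrite map_inj_uniq ?iota_uniq //; exact: natf_inj.
by have := max_poly_roots p_neq0 roots_xs uniq_xs; rewrite size_map size_iota ltnn.
Qed.

Definition extend_last m (v : 'I_m -> k) (x : k) (i : 'I_m.+1) : k :=
  if unlift ord_max i is Some j then v j else x.

Lemma widen_ord_max m (j : 'I_m) : widen_ord (leqnSn m) j = lift ord_max j.
Proof. by apply: ord_inj; rewrite lift_max. Qed.

Lemma meval_extend_last m (v : 'I_m -> k) x (p : {mpoly k[m.+1]}) :
  p.@[extend_last v x] = (map_poly (meval v) (muni p)).[x].
Proof.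
elim/mpolyind: p => [|c mm p _ _ IHp]; first by rewrite meval0 !raddf0 horner0.
rewrite mevalD muniD raddfD /= hornerD IHp; congr (_ + _).
rewrite muniZ mevalZ map_polyZ hornerZ /= mevalC; congr (_ * _).
rewrite muniE msuppX big_seq1 mcoeffX eqxx scale1r map_polyZ map_polyXn.
rewrite hornerZ hornerXn /= !mevalX big_ord_recr /= /extend_last unlift_none.
by congr (_ * _); apply: eq_bigr => j _; rewrite mnmE widen_ord_max liftK.
Qed.

Definition mrestr m (mm : 'X_{1..m.+1}) : 'X_{1..m} :=
  [multinom mm (widen_ord (leqnSn m) i) | i < m].

Lemma mrestr_inj m (a b : 'X_{1..m.+1}) :
  mrestr a = mrestr b -> a ord_max = b ord_max -> a = b.
Proof.
move=> eq_restr eq_max; apply/mnmP => i; case: (unliftP ord_max i) => [j ->|->] //.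
by have := congr1 (fun mm : 'X_{1..m} => mm j) eq_restr; rewrite !mnmE widen_ord_max.
Qed.

Lemma muni_eq0 m (p : {mpoly k[m.+1]}) : (muni p == 0) = (p == 0).
Proof.
apply/eqP/eqP => [muni_p0|->]; last exact: muni0.
apply/mpolyP => m0; rewrite mcoeff0.
have [m0_supp|] := boolP (m0 \in msupp p); last by rewrite mcoeff_msupp negbK => /eqP.
suff <- : ((muni p)`_(m0 ord_max))@_(mrestr m0) = p@_m0 by rewrite muni_p0 coef0 mcoeff0.
rewrite muniE coef_sum raddf_sum /= (bigD1_seq m0) ?msupp_uniq //=.
rewrite coefZ coefXn eqxx mulr1.
rewrite mcoeffZ mcoeffX -/(mrestr m0) eqxx mulr1 big1_seq ?addr0 //.
move=> mm /andP[ne_mm _]; rewrite coefZ coefXn.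
have [eq_max|] := eqVneq (m0 ord_max) (mm ord_max); last by rewrite mulr0 mcoeff0.
rewrite mulr1 mcoeffZ mcoeffX -/(mrestr mm).
have [eq_restr|] := eqVneq (mrestr mm) (mrestr m0); last by rewrite mulr0.
by move: ne_mm; rewrite (mrestr_inj eq_restr (esym eq_max)) eqxx.
Qed.

Lemma mpoly_nonroot m (p : {mpoly k[m]}) : p != 0 -> exists v : 'I_m -> k, p.@[v] != 0.
Proof.
elim: m p => [|m IHm] p p_neq0.
  exists (fun _ => 0); rewrite (nvar0_mpolyC p) mevalC.
  by apply: contraNneq p_neq0 => p0; rewrite (nvar0_mpolyC p) p0.
have [v lc_v] : exists v, (lead_coef (muni p)).@[v] != 0.
  by apply: IHm; rewrite lead_coef_eq0 muni_eq0.
have [|x root_x] := @poly_nonroot (map_poly (meval v) (muni p)).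
  by apply: contraNneq lc_v => p0; rewrite /lead_coef -coef_map p0 coef0.
by exists (extend_last v x); rewrite meval_extend_last.
Qed.

Definition det_mpoly n : {mpoly k[n * n]} :=
  \det (\matrix_(i < n, j < n) 'X_(mxvec_index i j)).

Lemma meval_det_mpoly n (g : 'M[k]_n) :
  (det_mpoly n).@[fun ij => mxvec g 0 ij] = \det g.
Proof.
rewrite -det_map_mx; congr (\det _); apply/matrixP => i j.
by rewrite !mxE /= -mxvecE mevalXU.
Qed.

Lemma exists_generic_unitmx n (P : {mpoly k[n * n]}) : P != 0 ->
  exists2 g : 'M[k]_n, g \in unitmx & P.@[fun ij => mxvec g 0 ij] != 0.
Proof.
move=> P_neq0; have det_neq0 : det_mpoly n != 0.
  by apply: contra_neq (oner_neq0 k) => det0; rewrite -(det1 k n) -meval_det_mpoly det0 meval0.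
have [w] := mpoly_nonroot (mulf_neq0 P_neq0 det_neq0).
pose g : 'M[k]_n := vec_mx (\row_ij w ij).
have eval_g : (fun ij => mxvec g 0 ij) =1 w by move=> ij; rewrite vec_mxK mxE.
rewrite mevalM mulf_eq0 negb_or -!(meval_eq _ eval_g) => /andP[Pg detg].
by exists g; rewrite // unitmxE unitfE -meval_det_mpoly.
Qed.

Lemma upward_closed_gin n (I : {mpoly k[n]} -> Prop) J :
  is_ideal I -> is_gin I J -> upward_closed J.
Proof.
move=> I_ideal [P [P_neq0 in_gI]]; have [g g_unit Pg] := exists_generic_unitmx P_neq0.
apply: upward_closed_of_MX => m i /(in_gI g g_unit Pg) in_m.
exact/(in_gI g g_unit Pg)/in_ideal_act_MX.
Qed.

End GenericCoordinates.

Theorem lemma2p1 (k : fieldType) (n : nat)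
  (char0 : [pchar k]%R =i pred0)
  (I : {mpoly k[n]} -> Prop) (J : 'X_{1..n} -> Prop) :
  is_homogeneous_ideal I -> is_artinian I -> is_gin I J ->
  (almost_revlex J <->
   forall i : nat, (1 <= i <= n - 1)%N ->
     (forall alpha : seq nat, size alpha = i -> inJset J alpha ->
        ole (osucc (fJ J (rcons (nseq (i - 1) 0%N) (sumn alpha).+1)))
            (fJ J alpha)) /\
     (forall alpha beta : seq nat, size alpha = i -> size beta = i ->
        inJset J alpha -> inJset J beta -> sumn alpha = sumn beta ->
        drevlt (mono_of n alpha) (mono_of n beta) ->
        ole (fJ J beta) (fJ J alpha))).
Proof.
move=> [I_ideal _] _ gin_IJ; have J_up := upward_closed_gin char0 I_ideal gin_IJ.
exact: iff_trans (almost_revlex_iff_conditions J_up) (iff_sym (fJ_conditionsE J_up)).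
Qed.
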